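(* Let $n\ge1$ and let $\mathfrak{h}$ be the complex vector space with basis $\{\beta^1,\dots,\beta^n,\alpha^1,\dots,\alpha^n\}$ and symmetric bilinear form with $(\beta^i,\beta^j)=\delta_{ij}$, $(\alpha^i,\alpha^j)=\delta_{ij}$, $(\beta^i,\alpha^j)=0$. Let $M(1)$ be the Heisenberg vertex operator algebra associated with $\mathfrak{h}$, and identify the commutative associative algebra $M(1)/C_2(M(1))$ with $\mathbb{C}[\zeta_1,\dots,\zeta_n,x_1,\dots,x_n]$ via $\alpha^i(-1)\mathbf{1}+C_2(M(1))\mapsto\zeta_i$, $\beta^i(-1)\mathbf{1}+C_2(M(1))\mapsto x_i$. For $i\in\{1,\dots,n\}$ define the linear map $f_i:M(1)\to M(1)$, $f_i(a)=\beta^i(1)a-\alpha^i(-1)a$. Then for $1\le k\le n$, the subspace $\sum_{i=1}^{k}f_i(M(1))+C_2(M(1))$ is an $MZ_{0,-1}$-subspace of $M(1)$ if and only if $\sum_{i=1}^{k}(\partial_{x_i}-\zeta_i)\mathbb{C}[\zeta_1,\dots,\zeta_n,x_1,\dots,x_n]$ is a Mathieu-Zhao subspace of $\mathbb{C}[\zeta_1,\dots,\zeta_n,x_1,\dots,x_n]$.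
   Context: Heisenberg VOA: for $\mathfrak{h}$ with nondegenerate symmetric form, $\hat{\mathfrak{h}}=\mathfrak{h}\otimes\mathbb{C}[t,t^{-1}]\oplus\mathbb{C}c$ with $[x\otimes t^m,y\otimes t^{p}]=(x,y)m\delta_{m+p,0}c$, $c$ central; $M(1)=U(\hat{\mathfrak{h}})\otimes_{U(\mathfrak{h}\otimes\mathbb{C}[t]\oplus\mathbb{C}c)}\mathbb{C}$ ($\mathfrak{h}\otimes\mathbb{C}[t]$ acting by $0$, $c$ by $1$), $\alpha(m)$ denotes the action of $\alpha\otimes t^m$, and $Y(\alpha(-1)\mathbf{1},z)=\sum_m\alpha(m)z^{-m-1}$, with vertex operators of general elements given by normal-ordered products; vacuum $\mathbf{1}=1\otimes1$. In particular $(\alpha(-1)\mathbf{1})_m=\alpha(m)$. $C_2(V)=\operatorname{span}\{u_{-2}v\}$, and $V/C_2(V)$ is a commutative associative algebra with product $(a+C_2)(b+C_2)=a_{-1}b+C_2$. Iterated products are nested to the right. For a subspace $M\subseteq V$ of a vertex algebra: $r_{0,-1}(M)$ is the set of $v$ for which there is $m\ge 0$ with $v_{n_1}\cdots v_{n_t}v\in M$ for all $t\ge m$, $n_i\in\{0,-1\}$; $lsr_{0,-1}(M)$ is the set of $v$ such that for every $b\in V$ there is $m\ge0$ with $b_sv_{n_1}\cdots v_{n_t}v\in M$ for all $t\ge m$, $s,n_i\in\{0,-1\}$; $rsr_{0,-1}(M)$ is the set of $v$ such that for every $w\in V$ there is $m\ge0$ with $(v_{n_1}\cdots v_{n_t}v)_sw\in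 M$ for all $t\ge m$, $s,n_i\in\{0,-1\}$; $sr_{0,-1}=lsr_{0,-1}\cap rsr_{0,-1}$; $M$ is an $MZ_{0,-1}$-subspace if $r_{0,-1}(M)=sr_{0,-1}(M)$. For a commutative associative unital algebra $A$ and a subspace $U$: $r(U)=\{a:\exists m\ge1,\ a^t\in U\ \forall t\ge m\}$, $sr(U)=\{a:\forall b,c\in A\ \exists m\ge1,\ ba^tc\in U\ \forall t\ge m\}$; $U$ is Mathieu-Zhao if $r(U)=sr(U)$. *)

(* Complex numbers are [R[i]] for an arbitrary
   [R : realType] (every realType is a model of the real numbers). *)
From HB Require Import structures.
From mathcomp Require Import all_boot all_algebra finmap.
From mathcomp Require Import reals.
From mathcomp.real_closed Require Import complex.
From mathcomp.multinomials Require Import monalg.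

Set Implicit Arguments.
Unset Strict Implicit.
Unset Printing Implicit Defensive.

Import GRing.Theory.
Local Open Scope ring_scope.

Notation Pol R I := {malg (complex R)[{cmonom I}]}.

Definition pvar (R : realType) (I : choiceType) (x : I) : Pol R I :=
  << ucm x >>.

Definition pderiv (R : realType) (I : choiceType) (x : I) (g : Pol R I)
  : Pol R I :=
  \sum_(mu <- msupp g) (g@_mu * (mu x)%:R) *: << divcm mu (ucm x) >>.

(* A basis vector of h is indexed by (c, i) : bool * 'I_n, where c = false   *)
(* means beta^(i+1) and c = true means alpha^(i+1).                          *)
(* M(1) = S(h (x) t^-1 C[t^-1]) is the polynomial ring in the variables      *)
(*   (c, i, p) : bool * 'I_n * nat   standing for  e_(c,i)(-p-1),            *)
(* the vacuum being the constant polynomial 1.                               *)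

Definition hidx (n : nat) := (bool * 'I_n)%type.
Definition Hvar (n : nat) := (bool * 'I_n * nat)%type.
Notation M1 R n := (Pol R (Hvar n)).

(* The action of e_a(r), a a basis vector of h, r : int, on M(1):
     r = -(p+1) < 0 : multiplication by the variable (a, p);
     r = 0          : 0;
     r = p+1 > 0    : (p+1) * d/d(a,p)   (since [a(r), a(-r)] = r (a,a) = r). *)
Definition amode (R : realType) (n : nat) (a : hidx n) (r : int)
  (v : M1 R n) : M1 R n :=
  match r with
  | Posz 0 => 0
  | Posz p.+1 => (p.+1)%:R *: pderiv (a, p) v
  | Negz p => pvar R (a, p) * v
  end.

(* conformal weight: the variable (a, p) has weight p+1 *)
Definition mwt (n : nat) (mu : {cmonom (Hvar n)}) : nat :=
  (\sum_(x <- finsupp mu) mu x * (x.2).+1)%N.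

Definition wtbound (R : realType) (n : nat) (v : M1 R n) : nat :=
  (\max_(mu <- msupp v) mwt mu)%N.

(* Vertex operators.  Y(1, z) = id, and for a monomial u = a(-k) w           *)
(* (k >= 1) the vertex operator is the normal ordered product               *)
(*   Y(a(-k)w, z) = : (d/dz)^(k-1)/(k-1)! a(z)  Y(w, z) :,                   *)
(* whose modes are                                                           *)
(*   (a(-k)w)_m v = sum_(i>=0) C(k+i-1, i) [ a(-k-i) (w_(m+i) v)             *)
(*                                  - (-1)^k w_(m-k-i) (a(i) v) ].           *)
(* Only finitely many terms are nonzero (all terms with                      *)
(* i > wt u + wt v + |m| vanish for weight reasons), so the sum is truncated.*)
(* [ymono f mu m v] is the m-th mode of the monomial mu applied to v, with   *)
(* fuel f = degree of mu.                                                    *)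

Fixpoint ymono (R : realType) (n : nat) (fuel : nat) (mu : {cmonom (Hvar n)})
  (m : int) (v : M1 R n) {struct fuel} : M1 R n :=
  match fuel with
  | 0 => if m == -1 then v else 0
  | f.+1 =>
    match (finsupp mu : seq (Hvar n)) with
    | [::] => if m == -1 then v else 0
    | x :: _ =>
      let w := divcm mu (ucm x) in
      let a := x.1 in
      let k := (x.2).+1 in
      \sum_(i < (mwt mu + wtbound v + `|m|%N).+1)
        ('C(k + i - 1, i))%:R *:
          ( amode a (- (k + i)%:Z) (ymono f w (m + i%:Z) v)
            - (-1) ^+ k *: ymono f w (m - k%:Z - i%:Z) (amode a i%:Z v) )
    end
  end.

Definition Ymode (R : realType) (n : nat) (u : M1 R n) (m : int) (v : M1 R n)
  : M1 R n :=
  \sum_(mu <- msupp u) u@_mu *: ymono (mdeg mu) mu m v.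

Definition inC2 (R : realType) (n : nat) (v : M1 R n) : Prop :=
  exists s : seq (M1 R n * M1 R n), v = \sum_(p <- s) Ymode p.1 (-2) p.2.

Definition fmap (R : realType) (n : nat) (i : 'I_n) (a : M1 R n) : M1 R n :=
  amode (false, i) 1 a - amode (true, i) (-1) a.

Definition Msub (R : realType) (n k : nat) (v : M1 R n) : Prop :=
  exists (a : 'I_n -> M1 R n) (c : M1 R n),
    inC2 c /\ v = \sum_(i < n | (i < k)%N) fmap i (a i) + c.

(* An index n_j in {0,-1} is encoded by a boolean: true = 0, false = -1.     *)

Definition sel01 (b : bool) : int := if b then 0 else -1.

Definition iterY (R : realType) (n : nat) (v : M1 R n) (ns : seq bool)
  : M1 R n :=
  foldr (fun b acc => Ymode v (sel01 b) acc) v ns.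

Definition r01 (R : realType) (n : nat) (M : M1 R n -> Prop) (v : M1 R n)
  : Prop :=
  exists m : nat, forall ns : seq bool, (m <= size ns)%N -> M (iterY v ns).

Definition lsr01 (R : realType) (n : nat) (M : M1 R n -> Prop) (v : M1 R n)
  : Prop :=
  forall b : M1 R n, exists m : nat, forall (ns : seq bool) (s : bool),
    (m <= size ns)%N -> M (Ymode b (sel01 s) (iterY v ns)).

Definition rsr01 (R : realType) (n : nat) (M : M1 R n -> Prop) (v : M1 R n)
  : Prop :=
  forall w : M1 R n, exists m : nat, forall (ns : seq bool) (s : bool),
    (m <= size ns)%N -> M (Ymode (iterY v ns) (sel01 s) w).

Definition sr01 (R : realType) (n : nat) (M : M1 R n -> Prop) (v : M1 R n)
  : Prop := lsr01 M v /\ rsr01 M v.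

Definition MZ01_subspace (R : realType) (n : nat) (M : M1 R n -> Prop) : Prop :=
  forall v, r01 M v <-> sr01 M v.

(* The polynomial side: C[zeta_1..zeta_n, x_1..x_n] with variables           *)
(* (false, i) = x_(i+1) and (true, i) = zeta_(i+1).                          *)

Notation Apol R n := (Pol R (hidx n)).

Definition Usub (R : realType) (n k : nat) (p : Apol R n) : Prop :=
  exists g : 'I_n -> Apol R n,
    p = \sum_(i < n | (i < k)%N)
          (pderiv (false, i) (g i) - pvar R (true, i) * g i).

Definition rad (A : comNzRingType) (U : A -> Prop) (a : A) : Prop :=
  exists m : nat, (1 <= m)%N /\ forall t : nat, (m <= t)%N -> U (a ^+ t).

Definition srad (A : comNzRingType) (U : A -> Prop) (a : A) : Prop :=
  forall b c : A, exists m : nat, (1 <= m)%N /\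
    forall t : nat, (m <= t)%N -> U (b * a ^+ t * c).

Definition MathieuZhao (A : comNzRingType) (U : A -> Prop) : Prop :=
  forall a, rad U a <-> srad U a.

(* Grade M(1) = C[a(-p-1)] by the level of a monomial, its conformal weight
   minus its degree.  The monomials of positive level span C_2(M(1)), so the
   algebra map [quot] killing them and sending a(-1) to the variable a
   identifies M(1)/C_2(M(1)) with A.  Counting weights, u_0 v and u_(-2) v have
   positive level and u_(-1) v agrees with u v up to positive level; hence
   [quot] sends v_(n_1) ... v_(n_t) v to 0 or to (quot v)^(t+1), and f_i to
   d/dx_i - zeta_i.  Through the surjection [quot], the radical and strong
   radical of the MZ_(0,-1) definition become those of the Mathieu-Zhao
   definition. *)

From Pilot Require Import Defs.
From HB Require Import structures.
From mathcomp Require Import all_boot all_algebra finmap.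
From mathcomp Require Import reals.
From mathcomp.real_closed Require Import complex.
From mathcomp.multinomials Require Import monalg.
From mathcomp Require Import zify.

Set Implicit Arguments.
Unset Strict Implicit.
Unset Printing Implicit Defensive.

Import GRing.Theory Num.Theory.
Local Open Scope ring_scope.
Local Notation "1" := (@mone _) : monom_scope.
Local Notation "x * y" := (mmul x y) : monom_scope.

Section LinearExtension.
Variables (K : comNzRingType) (I : choiceType).
Local Notation P := {malg K[{cmonom I}]}.

Definition mlin (S : lmodType K) (F : {cmonom I} -> S) (g : P) : S :=
  \sum_(mu <- msupp g) g@_mu *: F mu.

Section Fixed.
Variables (S : lmodType K) (F : {cmonom I} -> S).

Lemma mlinEw (g : P) (d : {fset {cmonom I}}) :
  (msupp g `<=` d)%fset -> mlin F g = \sum_(mu <- d) g@_mu *: F mu.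
Proof.
move=> le; rewrite /mlin (big_fset_incl _ le) // => mu _ /mcoeff_outdom ->.
by rewrite scale0r.
Qed.

Lemma mlin_is_linear : linear (mlin F).
Proof.
move=> c g1 g2; set d := (msupp g1 `|` msupp g2)%fset.
have le1 : (msupp g1 `<=` d)%fset by exact: fsubsetUl.
have le2 : (msupp g2 `<=` d)%fset by exact: fsubsetUr.
have leZ : (msupp (c *: g1) `<=` d)%fset.
  exact: fsubset_trans (msuppZ_le _ _) le1.
have leD : (msupp (c *: g1 + g2) `<=` d)%fset.
  by apply: fsubset_trans (msuppD_le _ _) _; rewrite fsubUset leZ le2.
rewrite (mlinEw leD) (mlinEw le1) (mlinEw le2) scaler_sumr -big_split /=.
by apply: eq_bigr => mu _; rewrite mcoeffD mcoeffZ scalerDl scalerA.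
Qed.

HB.instance Definition _ :=
  GRing.isLinear.Build K P S *:%R (mlin F) mlin_is_linear.

Lemma mlinZ c g : mlin F (c *: g) = c *: mlin F g.
Proof. exact: linearZ. Qed.

Lemma mlinU mu : mlin F << mu >> = F mu.
Proof. by rewrite /mlin msuppU1 big_seq_fset1 mcoeffUU scale1r. Qed.

Lemma eq_in_mlin (G : {cmonom I} -> S) g :
  {in msupp g, F =1 G} -> mlin F g = mlin G g.
Proof.
by move=> eqFG; rewrite /mlin !big_seq; apply: eq_bigr => mu /eqFG ->.
Qed.

Lemma mlin_funB (G : {cmonom I} -> S) g :
  mlin F g - mlin G g = mlin (fun mu => F mu - G mu) g.
Proof. by rewrite /mlin -sumrB; apply: eq_bigr => mu _; rewrite scalerBr. Qed.

End Fixed.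

Lemma malgUZ c (mu : {cmonom I}) : << c *g mu >> = c *: << mu >> :> P.
Proof.
apply/malgP => nu; rewrite mcoeffZ [LHS]mcoeffU [in RHS]mcoeffU1.
by case: eqP => _; rewrite ?mulr1 ?mulr0.
Qed.

Lemma mlin_malgU (g : P) : mlin (fun mu => << mu >>) g = g.
Proof.
rewrite [in RHS](monalgE g) /mlin; apply: eq_bigr => mu _.
by rewrite [RHS]malgUZ.
Qed.

Lemma malgUM (mu nu : {cmonom I}) : << mu >> * << nu >> = << (mu * nu)%M >> :> P.
Proof. by rewrite malgM_def fgmulUU mulr1. Qed.

Lemma mulr_mlinl (u v : P) : u * v = mlin (fun mu => << mu >> * v) u.
Proof.
rewrite -{1}(mlin_malgU u) /mlin mulr_suml; apply: eq_bigr => mu _.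
by rewrite scalerAl.
Qed.

Lemma mulUr_mlin (nu : {cmonom I}) (v : P) :
  << nu >> * v = mlin (fun mu => << (nu * mu)%M >>) v.
Proof.
rewrite -{1}(mlin_malgU v) /mlin mulr_sumr; apply: eq_bigr => mu _.
by rewrite -scalerAr malgUM.
Qed.

End LinearExtension.

Lemma mlin_comp (K : comNzRingType) (I J : choiceType) (S : lmodType K)
    (G : {cmonom J} -> S) (F : {cmonom I} -> {malg K[{cmonom J}]})
    (g : {malg K[{cmonom I}]}) :
  mlin G (mlin F g) = mlin (fun mu => mlin G (F mu)) g.
Proof.
by rewrite [mlin F g]/mlin raddf_sum; apply: eq_bigr => mu _; exact: mlinZ.
Qed.

Lemma divcmUK (I : choiceType) (mu : {cmonom I}) x :
  x \in finsupp mu -> mu = (ucm x * divcm mu (ucm x))%M.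
Proof.
move=> hx; apply/eqP/cmP => y; rewrite cmM ucmE divcmE ucmE.
have hx0 : mu x != 0%N by rewrite cmE_neq0.
case: (eqVneq x y) => [<-|_] /=; last by rewrite subn0.
by move: hx0; case: (mu x) => [|k] //= _; rewrite add1n subSS subn0.
Qed.

Section WeightedDegree.
Variables (K : comNzRingType) (I : choiceType) (w : I -> nat).
Local Notation P := {malg K[{cmonom I}]}.

Definition wdeg (mu : {cmonom I}) : nat := (\sum_(x <- finsupp mu) mu x * w x)%N.

Lemma wdegEw (mu : {cmonom I}) (d : {fset I}) :
  (finsupp mu `<=` d)%fset -> wdeg mu = (\sum_(x <- d) mu x * w x)%N.
Proof.
move=> le; rewrite /wdeg (big_fset_incl _ le) //.
by move=> x _; rewrite -cmE_neq0 negbK => /eqP ->.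
Qed.

Lemma wdeg1 : wdeg 1%M = 0%N.
Proof. by rewrite /wdeg mdom1 big_seq_fset0. Qed.

Lemma wdegU x : wdeg (ucm x) = w x.
Proof. by rewrite /wdeg mdomU big_seq_fset1 cmUU mul1n. Qed.

Lemma wdegM (mu nu : {cmonom I}) : wdeg (mu * nu)%M = (wdeg mu + wdeg nu)%N.
Proof.
rewrite (@wdegEw mu _ (fsubsetUl (finsupp mu) (finsupp nu))).
rewrite (@wdegEw nu _ (fsubsetUr (finsupp mu) (finsupp nu))) /wdeg mdomD.
by rewrite -big_split /=; apply/eq_bigr => x _; rewrite cmM mulnDl.
Qed.

Lemma wdeg_eq0 (mu : {cmonom I}) x : wdeg mu = 0%N -> (mu x * w x = 0)%N.
Proof.
move=> h; case: (boolP (x \in finsupp mu)) => hx; last first.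
  by move: hx; rewrite -cmE_eq0 => /eqP ->.
move: h; rewrite /wdeg (big_fsetD1 x) //= => /eqP.
by rewrite addn_eq0 => /andP[/eqP].
Qed.

Lemma wdeg_gt0 (mu : {cmonom I}) :
  (0 < wdeg mu)%N -> exists2 x, x \in finsupp mu & (0 < w x)%N.
Proof.
move=> h; have [/hasP[x hx hw]|/hasPn hn] :=
  boolP (has (fun x => 0 < w x)%N (finsupp mu)); first by exists x.
move: h; rewrite /wdeg big_seq big1 // => x /hn.
by rewrite -leqNgt leqn0 => /eqP ->; rewrite muln0.
Qed.

Definition wgeq (s : int) (g : P) : Prop :=
  forall mu, mu \in msupp g -> s <= (wdeg mu)%:Z.

Lemma wgeq0 s : wgeq s 0.
Proof. by move=> mu; rewrite msupp0. Qed.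

Lemma wgeqD s g1 g2 : wgeq s g1 -> wgeq s g2 -> wgeq s (g1 + g2).
Proof.
by move=> h1 h2 mu /(fsubsetP (msuppD_le _ _)); rewrite in_fsetU => /orP[/h1|/h2].
Qed.

Lemma wgeqZ s c g : wgeq s g -> wgeq s (c *: g).
Proof. by move=> h mu /(fsubsetP (msuppZ_le _ _)) /h. Qed.

Lemma wgeqB s g1 g2 : wgeq s g1 -> wgeq s g2 -> wgeq s (g1 - g2).
Proof. by move=> h1 h2; apply: wgeqD => // mu; rewrite msuppN => /h2. Qed.

Lemma wgeq_sum s (T : Type) (r : seq T) (Q : pred T) (G : T -> P) :
  (forall t, Q t -> wgeq s (G t)) -> wgeq s (\sum_(t <- r | Q t) G t).
Proof. by move=> h; apply: (big_ind (wgeq s)); [exact: wgeq0 | exact: wgeqD |]. Qed.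

Lemma wgeqU s (mu : {cmonom I}) : s <= (wdeg mu)%:Z -> wgeq s << mu >>.
Proof. by move=> h nu; rewrite msuppU1 in_fset1 => /eqP ->. Qed.

Lemma wgeqW s s' g : wgeq s g -> s' <= s -> wgeq s' g.
Proof. by move=> h2 h1 mu /h2 h; lia. Qed.

Lemma wgeq_any {g : P} : wgeq 0 g.
Proof. by []. Qed.

Lemma wgeq_mlin s F (g : P) :
  (forall mu, mu \in msupp g -> wgeq s (F mu)) -> wgeq s (mlin F g).
Proof. by move=> h; rewrite /mlin big_seq; apply: wgeq_sum => mu /h; exact: wgeqZ. Qed.

Lemma wgeqUM s (nu : {cmonom I}) (g : P) :
  wgeq s g -> wgeq (s + (wdeg nu)%:Z) (<< nu >> * g).
Proof.
move=> h; rewrite mulUr_mlin; apply: wgeq_mlin => mu /h hs; apply: wgeqU.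
by rewrite wdegM PoszD addrC lerD2l.
Qed.

End WeightedDegree.

Section Derivation.
Variables (R : realType) (I : choiceType).
Local Notation P := (Pol R I).

Lemma pderivE x (g : P) :
  pderiv x g = mlin (fun mu => (mu x)%:R *: << divcm mu (ucm x) >>) g.
Proof. by rewrite /pderiv /mlin; apply: eq_bigr => mu _; rewrite scalerA. Qed.

Lemma pderivU x (mu : {cmonom I}) :
  pderiv x << mu >> = (mu x)%:R *: << divcm mu (ucm x) >> :> P.
Proof. by rewrite pderivE mlinU. Qed.

Lemma pderiv0 x : pderiv x 0 = 0 :> P.
Proof. by rewrite pderivE raddf0. Qed.

Lemma wgeq_pderiv w s x (g : P) :
  wgeq w s g -> wgeq w (s - (w x)%:Z) (pderiv x g).
Proof.
move=> h; rewrite pderivE; apply: wgeq_mlin => mu /h hs.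
have [hx|hx] := boolP (x \in finsupp mu); last first.
  by move: hx; rewrite -cmE_eq0 => /eqP ->; rewrite scale0r; exact: wgeq0.
apply/wgeqZ/wgeqU; move: hs; rewrite {1}(divcmUK hx) wdegM wdegU PoszD.
by rewrite lerBlDl addrC.
Qed.

End Derivation.

Ltac lia_ifs := case: ifP => [?|/negbT ?]; case: ifP => [?|/negbT ?]; lia.

Section Heisenberg.
Variables (R : realType) (n : nat).
Local Notation M := (M1 R n).
Local Notation A := (Apol R n).

(* The variable (a, p) stands for a(-p-1), of conformal weight p + 1, so
   [lev mu] is the conformal weight of [mu] minus its degree. *)
Definition level (x : Hvar n) : nat := x.2.
Local Notation lev := (wdeg level).
Local Notation lgeq := (@wgeq (complex R) (Hvar n) level).

Lemma amode_neg (a : hidx n) (p i : nat) (y : M) :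
  amode a (- ((p.+1 + i)%N%:Z)) y = pvar R (a, (p + i)%N) * y.
Proof. by rewrite addSn. Qed.

Lemma lgeq_amode s a (i : nat) (v : M) :
  lgeq s v -> lgeq (s + 1 - i%:Z) (amode a i%:Z v).
Proof.
case: i => [|j] h /=; first exact: wgeq0.
apply: wgeqZ; apply: (wgeqW (wgeq_pderiv (x := (a, j)) h)).
by rewrite /level /=; lia.
Qed.

Lemma ymonoS f mu m (v : M) : mdeg mu = f.+1 ->
  exists2 x, mu = (ucm x * divcm mu (ucm x))%M &
  ymono f.+1 mu m v =
    \sum_(i < (mwt mu + wtbound v + `|m|%N).+1)
      ('C(x.2.+1 + i - 1, i))%:R *:
        (amode x.1 (- (x.2.+1 + i)%:Z) (ymono f (divcm mu (ucm x)) (m + i%:Z) v)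
         - (-1) ^+ x.2.+1 *:
             ymono f (divcm mu (ucm x)) (m - x.2.+1%:Z - i%:Z) (amode x.1 i%:Z v)).
Proof.
case Hs: (finsupp mu : seq _) => [|x tl] hdeg.
  by move: hdeg; rewrite mdegE Hs big_nil.
have hx : x \in finsupp mu.
  by rewrite -[_ \in _]/(x \in (finsupp mu : seq _)) Hs mem_head.
by exists x; [exact: divcmUK | rewrite [LHS]/= Hs].
Qed.

(* [wt (u_m v) = wt u + wt v - m - 1], while [deg (u_m v) <= deg u + deg v],
   and even [<= deg u + deg v - 2] when [m >= 0]. *)
Lemma lgeq_ymono f mu m (v : M) s : mdeg mu = f -> lgeq s v ->
  lgeq ((lev mu)%:Z + s - m - 1 + (if 0 <= m then 2 else 0)) (ymono f mu m v).
Proof.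
elim: f mu m v s => [|f IH] mu m v s hdeg hv.
  rewrite /= (mdeg_eq0I hdeg) wdeg1; case: eqP => [->|_]; last exact: wgeq0.
  by apply: (wgeqW hv); rewrite /=; lia.
have [x hmu ->] := ymonoS m v hdeg.
set w := divcm mu (ucm x) in hmu *.
have hdw : mdeg w = f by move: hdeg; rewrite {1}hmu mdegM mdegU add1n => -[].
have hew : lev mu = (x.2 + lev w)%N by rewrite {1}hmu wdegM wdegU.
apply: wgeq_sum => i _; apply/wgeqZ/wgeqB.
  rewrite amode_neg /pvar.
  apply: (wgeqW (wgeqUM (IH w (m + i%:Z) v s hdw hv))).
  by rewrite wdegU hew /level /=; move: (x.2) => p; lia_ifs.
apply: wgeqZ; apply: (wgeqW (IH w _ _ (s + 1 - i%:Z) hdw (lgeq_amode hv))).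
by rewrite hew; move: (x.2) => p; lia_ifs.
Qed.

Lemma ymono_m1_level0 f mu (v : M) : mdeg mu = f -> lev mu = 0%N ->
  lgeq 1 (ymono f mu (-1) v - << mu >> * v).
Proof.
elim: f mu v => [|f IH] mu v hdeg he0.
  by rewrite /= (mdeg_eq0I hdeg) ?eqxx mpolyC1E mul1r subrr; exact: wgeq0.
have [x hmu ->] := ymonoS (-1) v hdeg.
set w := divcm mu (ucm x) in hmu *.
have hdw : mdeg w = f by move: hdeg; rewrite {1}hmu mdegM mdegU add1n => -[].
have hew : lev mu = (x.2 + lev w)%N by rewrite {1}hmu wdegM wdegU.
have [hx2 hw0] : x.2 = 0%N /\ lev w = 0%N by move: hew; rewrite he0; lia.
(* Up to positive level, only the term a(-1) (w_(-1) v) survives. *)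
rewrite big_ord_recl addrAC; apply: wgeqD; last first.
  apply: wgeq_sum => i _; apply/wgeqZ/wgeqB.
    rewrite amode_neg /pvar.
    apply: (wgeqW (wgeqUM (wgeq_any level))).
    by rewrite wdegU lift0 /level /=; lia.
  apply: wgeqZ; apply: (wgeqW (lgeq_ymono hdw
    (lgeq_amode (a := x.1) (i := lift ord0 i) (wgeq_any level)))).
  by rewrite hw0 lift0 /=; lia.
rewrite bin0 scale1r addrAC; apply: wgeqB; last first.
  apply: wgeqZ; apply: (wgeqW (lgeq_ymono hdw
    (lgeq_amode (a := x.1) (i := 0) (wgeq_any level)))).
  by rewrite hw0 /=; lia.
rewrite amode_neg.
have -> : pvar R (x.1, (x.2 + 0)%N) = << ucm x >>.
  by rewrite addn0 -surjective_pairing.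
have -> : (<< mu >> : M) = << ucm x >> * << w >> by rewrite malgUM -hmu.
rewrite -mulrA -mulrBr.
by apply: (wgeqW (wgeqUM (IH w v hdw hw0))); rewrite wdegU; lia.
Qed.

Lemma Ymode_mlin (u : M) m v :
  Ymode u m v = mlin (fun mu => ymono (mdeg mu) mu m v) u.
Proof. by []. Qed.

Lemma lgeq_Ymode (u v : M) m :
  lgeq (- m - 1 + (if 0 <= m then 2 else 0)) (Ymode u m v).
Proof.
rewrite Ymode_mlin; apply: wgeq_mlin => mu _.
apply: (wgeqW (lgeq_ymono (erefl _) (wgeq_any level))).
by rewrite lerD2r; lia.
Qed.

Lemma lgeq_Ymode_m1 (u v : M) : lgeq 1 (Ymode u (-1) v - u * v).
Proof.
rewrite Ymode_mlin mulr_mlinl mlin_funB; apply: wgeq_mlin => mu _.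
have [he|he] := eqVneq (lev mu) 0%N; first exact: ymono_m1_level0.
have he' : (0 < lev mu)%N by rewrite lt0n.
apply: wgeqB.
  by apply: (wgeqW (lgeq_ymono (erefl _) (wgeq_any level))); rewrite /=; lia.
by apply: (wgeqW (wgeqUM (wgeq_any level))); lia.
Qed.


Lemma YmodeZ c (u : M) m v : Ymode (c *: u) m v = c *: Ymode u m v.
Proof. by rewrite !Ymode_mlin mlinZ. Qed.

Lemma ymono_ucm_m2 (a : hidx n) (p : nat) (v : M) :
  ymono 1 (ucm (a, p)) (-2) v = (p.+1)%:R *: (pvar R (a, p.+1) * v).
Proof.
rewrite /= mdomU -fset_seq1 /=.
have hne (j : nat) : (-2 - (p.+1)%:Z - j%:Z == -1) = false by apply/negbTE/eqP; lia.
have h1 : (1 < (mwt (ucm (a, p)) + wtbound v + (0 + 1).+1).+1)%N by rewrite !addnS.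
rewrite (bigD1 (Ordinal h1)) //= big1 => [|i hi].
  by rewrite addnK bin1 addn1 scaler0 subr0 addr0.
have hi' : nat_of_ord i != 1%N by apply: contraNneq hi => h; apply/eqP/val_inj.
rewrite hne (_ : (-2 + (nat_of_ord i)%:Z == -1) = false); last by apply/negbTE/eqP; lia.
by rewrite mulr0 scaler0 subr0 scaler0.
Qed.

Lemma inC2_0 : inC2 (0 : M).
Proof. by exists [::]; rewrite big_nil. Qed.

Lemma inC2D (x y : M) : inC2 x -> inC2 y -> inC2 (x + y).
Proof. by move=> [s1 ->] [s2 ->]; exists (s1 ++ s2); rewrite big_cat. Qed.

Lemma inC2Z c (x : M) : inC2 x -> inC2 (c *: x).
Proof.
move=> [s ->]; exists [seq (c *: p.1, p.2) | p <- s].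
by rewrite big_map scaler_sumr; apply: eq_bigr => p _; rewrite YmodeZ.
Qed.

Lemma inC2_mlin (I : choiceType) (F : {cmonom I} -> M) (g : Pol R I) :
  (forall mu, mu \in msupp g -> inC2 (F mu)) -> inC2 (mlin F g).
Proof.
move=> h; rewrite /mlin big_seq.
by apply: (big_ind (@inC2 R n)); [exact: inC2_0 | exact: inC2D | move=> mu /h /inC2Z].
Qed.

(* [a(-p-2) w = (a(-p-1) 1)_(-2) w / (p + 1)] *)
Lemma inC2_lev_gt0 (mu : {cmonom (Hvar n)}) : (0 < lev mu)%N -> inC2 (<< mu >> : M).
Proof.
case/wdeg_gt0 => -[a [|p]] hx // _.
have hmu := divcmUK hx.
have -> : (<< mu >> : M) =
    (p.+1%:R)^-1 *: Ymode << ucm (a, p) >> (-2) << divcm mu (ucm (a, p.+1)) >>.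
  rewrite Ymode_mlin mlinU mdegU ymono_ucm_m2 scalerA mulVf ?scale1r ?pnatr_eq0 //.
  by rewrite /pvar malgUM -hmu.
apply: inC2Z; exists [:: (<< ucm (a, p) >>, << divcm mu (ucm (a, p.+1)) >>)].
by rewrite big_seq1.
Qed.

Definition cmtrunc (mu : {cmonom (Hvar n)}) : {cmonom (hidx n)} :=
  [cmonom mu (b, 0%N) | b in [fset x.1 | x in finsupp mu]%fset]%M.

Definition cmlift (nu : {cmonom (hidx n)}) : {cmonom (Hvar n)} :=
  [cmonom (if x.2 == 0%N then nu x.1 else 0%N)
     | x in [fset (b, 0%N) | b in finsupp nu]%fset]%M.

Lemma cmtruncE mu b : cmtrunc mu b = mu (b, 0%N).
Proof.
rewrite /cmtrunc cmE fsfun_fun; case: ifP => // hb; apply/esym/eqP; rewrite cmE_eq0.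
by apply: contraFN hb => h; apply/imfsetP; exists (b, 0%N).
Qed.

Lemma cmliftE nu x : cmlift nu x = if x.2 == 0%N then nu x.1 else 0%N.
Proof.
rewrite /cmlift cmE fsfun_fun; case: ifP => // hx.
case: x hx => b q /= hx; case: eqP => // hq; subst q.
by apply/esym/eqP; rewrite cmE_eq0; apply: contraFN hx => h; apply/imfsetP; exists b.
Qed.

Lemma cmtrunc1 : cmtrunc 1%M = 1%M.
Proof. by apply/eqP/cmP => b; rewrite cmtruncE !cm1. Qed.

Lemma cmtruncM mu nu : cmtrunc (mu * nu)%M = (cmtrunc mu * cmtrunc nu)%M.
Proof. by apply/eqP/cmP => b; rewrite cmtruncE !cmM !cmtruncE. Qed.

Lemma cmtruncU (a : hidx n) : cmtrunc (ucm (a, 0%N)) = ucm a.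
Proof. by apply/eqP/cmP => b; rewrite cmtruncE !ucmE xpair_eqE eqxx andbT. Qed.

Lemma cmtrunc_divU (a : hidx n) mu :
  cmtrunc (divcm mu (ucm (a, 0%N))) = divcm (cmtrunc mu) (ucm a).
Proof.
by apply/eqP/cmP => b; rewrite cmtruncE !divcmE cmtruncE !ucmE xpair_eqE eqxx andbT.
Qed.

Lemma cmliftK : cancel cmlift cmtrunc.
Proof. by move=> nu; apply/eqP/cmP => b; rewrite cmtruncE cmliftE. Qed.

Lemma cmtruncK mu : lev mu = 0%N -> cmlift (cmtrunc mu) = mu.
Proof.
move=> he; apply/eqP/cmP => -[b q]; rewrite cmliftE /=; case: eqP => [->|hq].
  by rewrite cmtruncE.
have /eqP := wdeg_eq0 (b, q) he; rewrite muln_eq0 /level /=.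
by case/orP=> /eqP // hq0; case: hq.
Qed.

Lemma lev_cmlift nu : lev (cmlift nu) = 0%N.
Proof.
rewrite /wdeg big1_seq // => x _; rewrite cmliftE /level.
by case: eqP => [->|_]; rewrite ?muln0.
Qed.

Definition quot_monom (mu : {cmonom (Hvar n)}) : A :=
  if lev mu == 0%N then << cmtrunc mu >> else 0.

Lemma quot_monomM : {morph quot_monom : x y / (x * y)%M >-> (x * y)%R}.
Proof.
move=> mu nu; rewrite /quot_monom wdegM addn_eq0.
case: (lev mu == 0%N); case: (lev nu == 0%N); rewrite /= ?mul0r ?mulr0 //.
by rewrite cmtruncM malgUM.
Qed.

Lemma quot_monom1 : quot_monom 1%M = 1.
Proof. by rewrite /quot_monom wdeg1 eqxx cmtrunc1; exact: mpolyC1E. Qed.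

HB.instance Definition _ := isMultiplicative.Build {cmonom (Hvar n)} A quot_monom
  (quot_monomM, quot_monom1).

Definition quot (g : M) : A :=
  mmap (@mkmalgU {cmonom (hidx n)} (complex R) 1%M) quot_monom g.

Lemma quotE g : quot g = mlin quot_monom g.
Proof. by rewrite /quot mmapE /mlin; apply: eq_bigr => mu _; rewrite mul_malgC. Qed.

Lemma quotM u v : quot (u * v) = quot u * quot v.
Proof. by rewrite /quot rmorphM. Qed.

Lemma quotD u v : quot (u + v) = quot u + quot v.
Proof. by rewrite !quotE raddfD. Qed.

Lemma quotB u v : quot (u - v) = quot u - quot v.
Proof. by rewrite !quotE raddfB. Qed.

Lemma quot_sum (T : Type) (r : seq T) (P : pred T) (G : T -> M) :
  quot (\sum_(t <- r | P t) G t) = \sum_(t <- r | P t) quot (G t).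
Proof. by rewrite quotE raddf_sum; apply: eq_bigr => t _; rewrite quotE. Qed.

Lemma quotU mu : quot << mu >> = quot_monom mu.
Proof. by rewrite quotE mlinU. Qed.

Lemma quot_lgeq s g : 0 < s -> lgeq s g -> quot g = 0.
Proof.
move=> s_gt0 h; rewrite quotE /mlin big_seq big1 // => mu /h hmu.
rewrite /quot_monom (_ : (lev mu == 0%N) = false) ?scaler0 //.
by apply/negbTE; apply: contraTneq hmu => ->; apply/negP; lia.
Qed.

Lemma quot_pvar0 (a : hidx n) : quot (pvar R (a, 0%N)) = pvar R a.
Proof. by rewrite /pvar quotU /quot_monom wdegU eqxx cmtruncU. Qed.

Lemma quot_pderiv0 (a : hidx n) (g : M) :
  quot (pderiv (a, 0%N) g) = pderiv a (quot g).
Proof.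
rewrite !quotE !pderivE !mlin_comp.
apply: eq_in_mlin => mu _; rewrite mlinZ mlinU -pderivE.
have [hx|hx] := boolP ((a, 0%N) \in finsupp mu); last first.
  move: hx; rewrite -cmE_eq0 => /eqP h0; rewrite h0 scale0r /quot_monom.
  case: eqP => _; last by rewrite pderiv0.
  by rewrite pderivU cmtruncE h0 scale0r.
have hmu := divcmUK hx.
have he : lev (divcm mu (ucm (a, 0%N))) = lev mu by rewrite {2}hmu wdegM wdegU.
rewrite /quot_monom he; case: eqP => _; last by rewrite scaler0 pderiv0.
by rewrite pderivU cmtruncE cmtrunc_divU.
Qed.

Definition embed (p : A) : M := mlin (fun nu => << cmlift nu >>) p.

Lemma embedK : cancel embed quot.
Proof.
move=> p; rewrite quotE /embed mlin_comp -[RHS]mlin_malgU.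
apply: eq_in_mlin => nu _; by rewrite mlinU /quot_monom lev_cmlift eqxx cmliftK.
Qed.

Lemma inC2_embed_quot (c : M) : inC2 (c - embed (quot c)).
Proof.
rewrite quotE /embed mlin_comp -{1}(mlin_malgU c) mlin_funB.
apply: inC2_mlin => mu hmu; rewrite /quot_monom; case: eqP => he.
  by rewrite mlinU cmtruncK // subrr; exact: inC2_0.
by rewrite raddf0 subr0; apply: inC2_lev_gt0; rewrite lt0n; exact/eqP.
Qed.

End Heisenberg.

Section Transfer.
Variables (R : realType) (n k : nat).
Local Notation M := (M1 R n).

Lemma quot_fmap (i : 'I_n) (g : M) :
  quot (fmap i g) = pderiv (false, i) (quot g) - pvar R (true, i) * quot g.
Proof.
have -> : fmap i g = pderiv ((false, i), 0%N) g - pvar R ((true, i), 0%N) * g.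
  by rewrite /fmap -[pderiv _ g]scale1r.
apply: (etrans (quotB _ _)); congr (_ - _); first exact: quot_pderiv0.
by apply: (etrans (quotM _ _)); congr (_ * _); exact: quot_pvar0.
Qed.

Lemma quot_Ymode_m1 (u v : M) : quot (Ymode u (-1) v) = quot u * quot v.
Proof.
apply/eqP; rewrite -subr_eq0 -quotM -quotB.
by rewrite (quot_lgeq _ (@lgeq_Ymode_m1 R n u v)).
Qed.

Lemma quot_Ymode0 (u v : M) : quot (Ymode u 0 v) = 0.
Proof. exact: quot_lgeq _ (@lgeq_Ymode R n u v 0). Qed.

Lemma quot_Ymode_m2 (u v : M) : quot (Ymode u (-2) v) = 0.
Proof. exact: quot_lgeq _ (@lgeq_Ymode R n u v (-2)). Qed.

Lemma quot_iterY (v : M) ns :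
  quot (iterY v ns) = if has id ns then 0 else quot v ^+ (size ns).+1.
Proof.
elim: ns => [|[] ns IH] /=; first by rewrite expr1.
  exact: quot_Ymode0.
by rewrite quot_Ymode_m1 IH; case: ifP => _; rewrite ?mulr0 // exprS.
Qed.

Lemma Usub0 : Usub k (0 : Apol R n).
Proof.
by exists (fun _ => 0); apply/esym/big1 => i _; rewrite pderiv0 mulr0 subr0.
Qed.

Lemma Msub_quot (v : M) : Msub k v <-> Usub k (quot v).
Proof.
split=> [[a [c [[s hs] ->]]]|[g hg]].
  exists (fun i => quot (a i)); rewrite quotD quot_sum (_ : quot c = 0) ?addr0.
    by apply: eq_bigr => i _; rewrite quot_fmap.
  by rewrite hs quot_sum big1 // => p _; rewrite quot_Ymode_m2.
set c := v - \sum_(i < n | (i < k)%N) fmap i (embed (g i)).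
exists (fun i => embed (g i)), c; split; last by rewrite /c addrC subrK.
have quot_c : quot c = 0.
  rewrite /c quotB quot_sum hg; apply/eqP; rewrite subr_eq0; apply/eqP.
  by apply: eq_bigr => i _; rewrite quot_fmap embedK.
by have := inC2_embed_quot c; rewrite quot_c /embed raddf0 subr0.
Qed.

Lemma r01_quot (v : M) : r01 (Msub k) v <-> Defs.rad (Usub k) (quot v).
Proof.
split=> [[m hm]|[m [_ hm]]].
  exists m.+1; split=> // t ht; have t_gt0 : (0 < t)%N by lia.
  have size_ns : (m <= size (nseq t.-1 false))%N by rewrite size_nseq; lia.
  have /Msub_quot := hm _ size_ns.
  by rewrite quot_iterY has_nseq andbF size_nseq prednK.
exists m => ns hns; apply/Msub_quot; rewrite quot_iterY.
by case: ifP => _; [exact: Usub0 | exact/hm/leqW].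
Qed.

Lemma sr01_quot (v : M) : sr01 (Msub k) v <-> Defs.srad (Usub k) (quot v).
Proof.
split=> [[hl _] b c|hs].
  have [m hm] := hl (embed (b * c)); exists m.+1; split=> // t ht.
  have t_gt0 : (0 < t)%N by lia.
  have size_ns : (m <= size (nseq t.-1 false))%N by rewrite size_nseq; lia.
  have /Msub_quot := hm _ false size_ns.
  rewrite /= quot_Ymode_m1 embedK quot_iterY has_nseq andbF size_nseq.
  by rewrite (prednK t_gt0) => h; apply: (eq_ind _ (Usub k) h); exact: mulrAC.
split=> [b|w].
  have [m [_ hm]] := hs (quot b) 1; exists m => ns [] hns; apply/Msub_quot.
    by rewrite /= quot_Ymode0; exact: Usub0.
  rewrite /= quot_Ymode_m1 quot_iterY.
  case: ifP => _; first by rewrite mulr0; exact: Usub0.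
  by rewrite -[_ * _]mulr1; exact/hm/leqW.
have [m [_ hm]] := hs 1 (quot w); exists m => ns [] hns; apply/Msub_quot.
  by rewrite /= quot_Ymode0; exact: Usub0.
rewrite /= quot_Ymode_m1 quot_iterY.
case: ifP => _; first by rewrite mul0r; exact: Usub0.
by rewrite -[quot v ^+ _]mul1r; exact/hm/leqW.
Qed.

End Transfer.

Theorem mainTheorem14 (R : realType) (n k : nat) :
  (1 <= n)%N -> (1 <= k <= n)%N ->
  (MZ01_subspace (@Msub R n k) <-> MathieuZhao (@Usub R n k)).
Proof.
move=> _ _; split=> MZ a.
  rewrite -(embedK a); split=> h.
    by apply/sr01_quot/MZ/r01_quot.
  by apply/r01_quot/MZ/sr01_quot.
split=> h.
  by apply/sr01_quot/MZ/r01_quot.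
by apply/r01_quot/MZ/sr01_quot.
Qed.
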